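(* Let $v=(x,y,w,s,z)$, let $\bar\sigma\in(0,\tfrac12)$, $\alpha\in(0,\tfrac{\pi}{2}]$, $\beta\in(0,\tfrac12]$ and $\sigma\in(\bar\sigma,1)$, and let $\mu=z^Ts/p$. Let $\dot v$ be a solution of $F'(v)\dot v=F(v)-\sigma\mu\bar e$, let $\ddot v$ be any vector of the same dimension, and $v(\alpha)=v-\dot v\sin(\alpha)+\ddot v(1-\cos(\alpha))$. Set $D=2F(v)^TF'(v)\dot v$. If $$\phi(v(\alpha))\le\phi(v)-\beta\sin(\alpha)\,D,$$ then $$\phi(v(\alpha))\le\phi(v)\big(1-2\beta(1-\sigma)\sin(\alpha)\big)<\phi(v).$$
   Context: Let $f:\mathbb{R}^n\to\mathbb{R}$, $h:\mathbb{R}^n\to\mathbb{R}^m$, $g:\mathbb{R}^n\to\mathbb{R}^p$ ($m<n$, $p\ge1$) be twice differentiable. Variables $v=(x,y,w,s,z)\in\mathbb{R}^n\times\mathbb{R}^m\times\mathbb{R}^p\times\mathbb{R}^p\times\mathbb{R}^p$. With $\nabla h(x)=[\nabla h_1(x),\dots,\nabla h_m(x)]$, $\nabla g(x)=[\nabla g_1(x),\dots,\nabla g_p(x)]$, let $\nabla_xL(v)=\nabla f(x)+\nabla h(x)y-\nabla g(x)w$ and $\nabla_x^2L(v)$ its Jacobian in $x$. $\mathcal{D}(u)$ is the diagonal matrix with diagonal $u$, $e$ the all-ones vector, $\bar e=(0,0,0,0,e)$. $F(v)=(\nabla_xL(v),h(x),g(x)-s,w-z,\mathcal{D}(z)s)$,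 $\phi(v)=\|F(v)\|_2^2$, and $$F'(v)=\begin{bmatrix}\nabla_x^2L(v)&\nabla h(x)&-\nabla g(x)&0&0\\ \nabla h(x)^T&0&0&0&0\\ \nabla g(x)^T&0&0&-I&0\\ 0&0&I&0&-I\\ 0&0&0&\mathcal{D}(z)&\mathcal{D}(s)\end{bmatrix}.$$ *)

From HB Require Import structures.
From mathcomp Require Import all_boot all_order all_algebra.
From mathcomp Require Import all_classical all_reals.
From mathcomp Require Import topology normedtype derive trigo.
Set Implicit Arguments. Unset Strict Implicit. Unset Printing Implicit Defensive.
Import Order.TTheory GRing.Theory Num.Theory.
Import numFieldNormedType.Exports.
Local Open Scope ring_scope.

Section Defs.
Variables (R : realType) (n m p : nat).

Definition dimV := (n + (m + (p + (p + p))))%N.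

Definition vx (v : 'cV[R]_dimV) : 'cV[R]_n := @usubmx R n (m + (p + (p + p))) 1 v.
Definition vrest1 (v : 'cV[R]_dimV) := @dsubmx R n (m + (p + (p + p))) 1 v.
Definition vy (v : 'cV[R]_dimV) : 'cV[R]_m := @usubmx R m (p + (p + p)) 1 (vrest1 v).
Definition vrest2 (v : 'cV[R]_dimV) := @dsubmx R m (p + (p + p)) 1 (vrest1 v).
Definition vw (v : 'cV[R]_dimV) : 'cV[R]_p := @usubmx R p (p + p) 1 (vrest2 v).
Definition vrest3 (v : 'cV[R]_dimV) := @dsubmx R p (p + p) 1 (vrest2 v).
Definition vs (v : 'cV[R]_dimV) : 'cV[R]_p := @usubmx R p p 1 (vrest3 v).
Definition vz (v : 'cV[R]_dimV) : 'cV[R]_p := @dsubmx R p p 1 (vrest3 v).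

Variables (f : 'rV[R]_n -> R) (h : 'rV[R]_n -> 'rV[R]_m) (g : 'rV[R]_n -> 'rV[R]_p).

Definition gradf (x : 'rV[R]_n) : 'cV[R]_n := jacobian (fun x' => (f x')%:M : 'rV[R]_1) x.
(* nabla h(x) = [grad h_1, ..., grad h_m] : n x m ; jacobian has entries d h_j / d x_i *)
Definition gradh (x : 'rV[R]_n) : 'M[R]_(n, m) := jacobian h x.
Definition gradg (x : 'rV[R]_n) : 'M[R]_(n, p) := jacobian g x.

Definition gradL (x : 'rV[R]_n) (y : 'cV[R]_m) (w : 'cV[R]_p) : 'cV[R]_n :=
  gradf x + gradh x *m y - gradg x *m w.

(* nabla_x^2 L : the Jacobian (in x) of nabla_x L, entry (i,j) = d (grad L)_i / d x_j *)
Definition hessL (x : 'rV[R]_n) (y : 'cV[R]_m) (w : 'cV[R]_p) : 'M[R]_n :=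
  (jacobian (fun x' => (gradL x' y w)^T) x)^T.

Definition Dg (k : nat) (u : 'cV[R]_k) : 'M[R]_k := diag_mx u^T.

Definition ebar : 'cV[R]_dimV :=
  col_mx 0 (col_mx 0 (col_mx 0 (col_mx 0 (const_mx 1)))).

Definition Fv (v : 'cV[R]_dimV) : 'cV[R]_dimV :=
  let x := (vx v)^T in
  col_mx (gradL x (vy v) (vw v))
 (col_mx (h x)^T
 (col_mx ((g x)^T - vs v)
 (col_mx (vw v - vz v)
         (Dg (vz v) *m vs v)))).

Definition phi (v : 'cV[R]_dimV) : R := \sum_(i < dimV) (Fv v i 0) ^+ 2.

Definition Fprime (v : 'cV[R]_dimV) : 'M[R]_dimV :=
  let x := (vx v)^T in
  let H := hessL x (vy v) (vw v) in
  let Jh := gradh x in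
  let Jg := gradg x in
  col_mx
   (row_mx H (row_mx Jh (row_mx (- Jg) (row_mx 0 0))))
  (col_mx
   (row_mx Jh^T (row_mx 0 (row_mx 0 (row_mx 0 0))))
  (col_mx
   (row_mx Jg^T (row_mx 0 (row_mx 0 (row_mx (- 1%:M) 0))))
  (col_mx
   (row_mx 0 (row_mx 0 (row_mx 1%:M (row_mx 0 (- 1%:M)))))
   (row_mx 0 (row_mx 0 (row_mx 0 (row_mx (Dg (vz v)) (Dg (vs v))))))))).

Definition mu (v : 'cV[R]_dimV) : R := ((vz v)^T *m vs v) 0 0 / p%:R.

End Defs.

From HB Require Import structures.
From mathcomp Require Import all_boot all_order all_algebra.
From mathcomp Require Import all_classical all_reals.
From mathcomp Require Import topology normedtype derive trigo.
From mathcomp Require Import ring lra.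
Import Order.TTheory GRing.Theory Num.Theory.
Import numFieldNormedType.Exports.
Local Open Scope ring_scope.

(* Multiplying the Newton equation by F(v)^T gives
   F^T F' vdot = phi(v) - sigma mu (sum_i z_i s_i) = phi(v) - sigma (sum_i z_i s_i)^2 / p.
   By the quadratic-mean inequality (sum_i z_i s_i)^2 / p <= sum_i (z_i s_i)^2, and the
   latter is one block of phi(v), so D >= 2 (1 - sigma) phi(v).  The Armijo condition then
   gives the first bound, and the decrease is strict because phi(v) > 0 and sin alpha > 0. *)

Lemma mulmx_tr_self00 {R : pzRingType} {k} (a : 'cV[R]_k) :
  (a^T *m a) 0 0 = \sum_i a i 0 ^+ 2.
Proof. by rewrite mxE; apply: eq_bigr => i _; rewrite mxE expr2. Qed.

Lemma sumr_sqr_ge0 {R : realDomainType} {k} (t : 'I_k -> R) : 0 <= \sum_i t i ^+ 2.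
Proof. by apply: sumr_ge0 => i _; apply: sqr_ge0. Qed.

Lemma cV_sumr_sqr_gt0 {R : realDomainType} {k} (a : 'cV[R]_k) :
  a != 0 -> 0 < \sum_i a i 0 ^+ 2.
Proof.
move=> a_neq0; rewrite lt_def sumr_sqr_ge0 andbT; apply: contra a_neq0.
move=> /eqP/psumr_eq0P sum0; apply/eqP/matrixP => i j; rewrite (ord1 j) mxE.
by apply/eqP; rewrite -sqrf_eq0; apply/eqP/sum0 => // k' _; apply: sqr_ge0.
Qed.

Lemma sqr_sumr_le {R : realDomainType} {k} (t : 'I_k -> R) :
  (\sum_i t i) ^+ 2 <= k%:R * \sum_i t i ^+ 2.
Proof.
case: k t => [|k] t; first by rewrite !big_ord0 expr0n mul0r.
set S := \sum_i t i.
have expand :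
    \sum_i (k.+1%:R * t i - S) ^+ 2 = k.+1%:R * (k.+1%:R * \sum_i t i ^+ 2 - S ^+ 2).
  transitivity (\sum_i (k.+1%:R ^+ 2 * t i ^+ 2 - (k.+1%:R * S) *+ 2 * t i + S ^+ 2)).
    by apply: eq_bigr => i _; ring.
  rewrite !big_split /= sumrN -!mulr_sumr sumr_const card_ord -/S mulr_natl; ring.
have := sumr_sqr_ge0 (fun i => k.+1%:R * t i - S); rewrite expand.
by rewrite pmulr_rge0 ?ltr0n // subr_ge0.
Qed.

Section NewtonDirection.
Context {R : realType} {n m p : nat}.
Context {f : 'rV[R]_n -> R} {h : 'rV[R]_n -> 'rV[R]_m} {g : 'rV[R]_n -> 'rV[R]_p}.
Context {v : 'cV[R]_(dimV n m p)}.

Let F := Fv f h g v.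
Let zs : 'I_p -> R := fun i => vz v i 0 * vs v i 0.

Lemma phiE : phi f h g v = (F^T *m F) 0 0.
Proof. by rewrite mulmx_tr_self00. Qed.

Lemma Fv_tr_ebar : (F^T *m ebar R n m p) 0 0 = \sum_i zs i.
Proof.
rewrite /F /Fv /ebar !tr_col_mx !mul_row_col !mulmx0 !add0r /Dg mul_diag_mx mxE.
by apply: eq_bigr => i _; rewrite /zs !mxE mulr1.
Qed.

Lemma muE : mu v = (\sum_i zs i) / p%:R.
Proof. by rewrite /mu mxE; congr (_ / _); apply: eq_bigr => i _; rewrite /zs mxE. Qed.

Lemma complementarity_sqr_le_phi : \sum_i zs i ^+ 2 <= phi f h g v.
Proof.
have -> : \sum_i zs i ^+ 2 = ((Dg (vz v) *m vs v)^T *m (Dg (vz v) *m vs v)) 0 0.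
  by rewrite mulmx_tr_self00 /Dg mul_diag_mx; apply: eq_bigr => i _; rewrite /zs !mxE.
have addmx00 (A B : 'M[R]_1) : (A + B) 0 0 = A 0 0 + B 0 0 by rewrite mxE.
rewrite phiE /F /Fv !tr_col_mx !mul_row_col !addmx00 !addrA lerDr.
by rewrite !addr_ge0 // mulmx_tr_self00 sumr_sqr_ge0.
Qed.

Lemma newton_direction_descent {sigma : R} {vd : 'cV[R]_(dimV n m p)} :
  (0 < p)%N -> 0 <= sigma ->
  Fprime f h g v *m vd = F - (sigma * mu v) *: ebar R n m p ->
  (1 - sigma) * phi f h g v <= (F^T *m Fprime f h g v *m vd) 0 0.
Proof.
move=> p_gt0 sigma_ge0 newton.
have -> : (F^T *m Fprime f h g v *m vd) 0 0
    = phi f h g v - sigma * ((\sum_i zs i) ^+ 2 / p%:R).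
  rewrite -mulmxA newton mulmxBr -scalemxAr phiE muE -Fv_tr_ebar.
  by move: (F^T *m F) (F^T *m ebar R n m p) => A B; rewrite !mxE; ring.
suff : sigma * ((\sum_i zs i) ^+ 2 / p%:R) <= sigma * phi f h g v by lra.
apply: ler_wpM2l => //; apply: le_trans complementarity_sqr_le_phi.
by rewrite ler_pdivrMr ?ltr0n // mulrC sqr_sumr_le.
Qed.

End NewtonDirection.

Theorem lemma2 (R : realType) (n m p : nat)
  (f : 'rV[R]_n -> R) (h : 'rV[R]_n -> 'rV[R]_m) (g : 'rV[R]_n -> 'rV[R]_p)
  (Hmn : (m < n)%N) (Hp : (1 <= p)%N)
  (* f, h, g twice differentiable *)
  (Hf1 : forall x, differentiable (fun x' => (f x')%:M : 'rV[R]_1) x)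
  (Hh1 : forall x, differentiable h x)
  (Hg1 : forall x, differentiable g x)
  (Hf2 : forall x, differentiable (gradf f) x)
  (Hh2 : forall x, differentiable (gradh h) x)
  (Hg2 : forall x, differentiable (gradg g) x)
  (v : 'cV[R]_(dimV n m p))
  (sigmabar alpha beta sigma : R)
  (Hsb : 0 < sigmabar < 1 / 2)
  (Ha : 0 < alpha <= pi / 2)
  (Hb : 0 < beta <= 1 / 2)
  (Hs : sigmabar < sigma < 1)
  (vd vdd : 'cV[R]_(dimV n m p))
  (Hvd : Fprime f h g v *m vd = Fv f h g v - (sigma * mu v) *: ebar R n m p)
  (HFnz : Fv f h g v != 0) :
  let valpha := v - sin alpha *: vd + (1 - cos alpha) *: vdd in
  let D := 2 * (((Fv f h g v)^T *m Fprime f h g v *m vd) 0 0) in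
  phi f h g valpha <= phi f h g v - beta * sin alpha * D ->
  phi f h g valpha <= phi f h g v * (1 - 2 * beta * (1 - sigma) * sin alpha)
  /\ phi f h g v * (1 - 2 * beta * (1 - sigma) * sin alpha) < phi f h g v.
Proof.
move=> valpha D armijo.
have [sigma_gt0 sigma_lt1] : 0 < sigma /\ sigma < 1.
  by case/andP: Hsb => sb_gt0 _; case/andP: Hs => sb_lt ->; split; lra.
have descent := newton_direction_descent Hp (ltW sigma_gt0) Hvd.
have phi_gt0 : 0 < phi f h g v by apply: cV_sumr_sqr_gt0.
have sin_gt0 : 0 < sin alpha.
  case/andP: Ha => alpha_gt0 alpha_le; apply: sin_gt0_pi; rewrite alpha_gt0 /=.
  by apply: le_lt_trans alpha_le _; have := @pi_gt0 R; lra.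
have [beta_gt0 _] := andP Hb.
have decrease_gt0 : 0 < beta * sin alpha * (2 * ((1 - sigma) * phi f h g v)).
  by rewrite !mulr_gt0 // subr_gt0.
have armijo_descent := ler_wpM2l (ltW (mulr_gt0 beta_gt0 sin_gt0))
  (ler_wpM2l (ler0n R 2) descent).
set Phi := phi f h g v in phi_gt0 decrease_gt0 armijo_descent armijo *.
have -> : Phi * (1 - 2 * beta * (1 - sigma) * sin alpha)
    = Phi - beta * sin alpha * (2 * ((1 - sigma) * Phi)) by ring.
split; last by rewrite gtrDl oppr_lt0.
by apply: le_trans armijo _; rewrite lerD2l lerN2; exact: armijo_descent.
Qed.
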